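(* Let $f:\{0,1\}^n\to\{0,1\}$, let $\delta>0$, let $a,b$ be non-negative integers, $\alpha_0\in[0,1)$, $\beta_0,\alpha_1,\beta_1\ge0$, and let $\mu$ be a bit-wise product distribution on $\{0,1\}^n$ that is $(\alpha_0,\beta_0,\alpha_1,\beta_1,a,b)$-feasible for $f$. Then there is a deterministic decision tree for $f$ of depth at most $ab$ whose error probability under $\mu$ is at most $$\frac14+\alpha_1+\beta_1+4b(\beta_1+\delta)+\frac{\beta_0}{(1-\alpha_0)\delta}.$$
   Context: $\mu$ is bit-wise product if $\mu(x)=\prod_i p_i(x_i)$ with $p_i(0)+p_i(1)=1$. A subcube with support $s\in\{0,1,\star\}^n$ is $\{x: s_i\ne\star\Rightarrow x_i=s_i\}$; its support size is $|\{i:s_i\in\{0,1\}\}|$. For $A\subseteq\{0,1\}^n$, $\mu_z(A)=\mu(A\cap f^{-1}(z))$, $\mu_z=\mu_z(\{0,1\}^n)$. $\mu$ is $(\alpha_0,\beta_0,\alpha_1,\beta_1,a,b)$-feasible for $f$ if there exist $u_R\ge0$ indexed by subcubes $R$ of support size at most $a$ and $w_R\ge0$ indexed by subcubes $R$ of support size at most $b$ with: $\sum_{R\ni x}u_R\ge1-\alpha_0$ for all $x\in f^{-1}(0)$; $\sum_{R\ni x}u_R\le\beta_0$ for all $x\in f^{-1}(1)$; $\sum_R\mu_1(R)w_R\ge(1-\alpha_1)\mu_1$; $\sum_{R\ni x}w_R\le1$ for all $x$; $\sum_{R\ni x}w_R\le\beta_1$ for all $x\in f^{-1}(0)$. Convention: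 if $p_i(0)\in\{0,1\}$ (bit $i$ fixed under $\mu$), then $i$ is not in the support of any $R$ used in the feasible solution. *)

From HB Require Import structures.
From mathcomp Require Import all_boot all_order all_algebra.
Set Implicit Arguments. Unset Strict Implicit. Unset Printing Implicit Defensive.
Import Order.TTheory GRing.Theory Num.Theory.
Local Open Scope ring_scope.

(* Points of {0,1}^n : false = 0, true = 1. *)
Definition cube (n : nat) := {ffun 'I_n -> bool}.

(* A subcube support s in {0,1,*}^n : None = star, Some b = fixed to b. *)
Definition support (n : nat) := {ffun 'I_n -> option bool}.

Definition in_subcube (n : nat) (s : support n) (x : cube n) : bool :=
  [forall i, if s i is Some b then x i == b else true].

Definition supp_size (n : nat) (s : support n) : nat :=
  #|[set i | s i != None]|.

Definition is_bitwise_marginals (R : realFieldType) (n : nat) (p : 'I_n -> bool -> R) : Prop :=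
  forall i, 0 <= p i false /\ 0 <= p i true /\ p i false + p i true = 1.

Definition prodmu (R : realFieldType) (n : nat) (p : 'I_n -> bool -> R) (x : cube n) : R :=
  \prod_(i < n) p i (x i).

(* mu_z(A) for A a subcube: mu(A ∩ f^{-1}(z)) *)
Definition mu_z_sub (R : realFieldType) (n : nat) (p : 'I_n -> bool -> R)
  (f : cube n -> bool) (z : bool) (s : support n) : R :=
  \sum_(x : cube n | in_subcube s x && (f x == z)) prodmu p x.

Definition mu_z (R : realFieldType) (n : nat) (p : 'I_n -> bool -> R)
  (f : cube n -> bool) (z : bool) : R :=
  \sum_(x : cube n | f x == z) prodmu p x.

Definition fixed_bit (R : realFieldType) (n : nat) (p : 'I_n -> bool -> R) (i : 'I_n) : bool :=
  (p i false == 0) || (p i false == 1).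

Definition admissible_weights (R : realFieldType) (n : nat) (p : 'I_n -> bool -> R)
  (k : nat) (w : support n -> R) : Prop :=
  forall s, 0 <= w s /\
    ((k < supp_size s)%N \/ (exists i, (s i != None) && fixed_bit p i) -> w s = 0).

Definition cover (R : realFieldType) (n : nat) (w : support n -> R) (x : cube n) : R :=
  \sum_(s : support n | in_subcube s x) w s.

Definition feasible (R : realFieldType) (n : nat) (p : 'I_n -> bool -> R)
  (f : cube n -> bool) (alpha0 beta0 alpha1 beta1 : R) (a b : nat) : Prop :=
  exists (u w : support n -> R),
    admissible_weights p a u /\ admissible_weights p b w /\
    (forall x, f x = false -> 1 - alpha0 <= cover u x) /\
    (forall x, f x = true -> cover u x <= beta0) /\
    (1 - alpha1) * mu_z p f true <= \sum_(s : support n) mu_z_sub p f true s * w s /\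
    (forall x, cover w x <= 1) /\
    (forall x, f x = false -> cover w x <= beta1).

Inductive dtree (n : nat) : Type :=
  | Leaf : bool -> dtree n
  | Query : 'I_n -> dtree n -> dtree n -> dtree n. (* child for 0, child for 1 *)

Fixpoint dt_eval (n : nat) (t : dtree n) (x : cube n) : bool :=
  match t with
  | Leaf v => v
  | Query i t0 t1 => if x i then dt_eval t1 x else dt_eval t0 x
  end.

Fixpoint dt_depth (n : nat) (t : dtree n) : nat :=
  match t with
  | Leaf _ => 0
  | Query _ t0 t1 => (maxn (dt_depth t0) (dt_depth t1)).+1
  end.

Definition dt_error (R : realFieldType) (n : nat) (p : 'I_n -> bool -> R)
  (f : cube n -> bool) (t : dtree n) : R :=
  \sum_(x : cube n | dt_eval t x != f x) prodmu p x.

(* Induction on the number [k] of rounds left, along a restriction of the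
   input to a subcube ([agree D c]), with the invariant that some tree of
   depth [k * a] errs there with mass at most
     E[f(x) (1 - cover_w(x) + beta1 + W_k(x))] + k * C + theta,
   where W_k(x) is the [w]-weight of the subcubes through [x] with more than
   [k] fixed coordinates outside [D] and C = beta1 + beta0 / ((1 - alpha0) theta).
   With no round left, answer 0 if the restriction contains a 0-input x0: the
   subcubes through [x] whose fixed coordinates all lie in [D] contain x0, so
   they weigh at most beta1.  Otherwise answer 1 if f^-1(0) has mass at most
   theta in the restriction.  If not, averaging the 0-certificate weights [u]
   over the restriction gives a subcube [Q] with at most [a] fixed coordinates
   such that, mu being a product measure, setting the coordinates of [Q]
   sends the restriction into f^-1(1) with probability at most
   beta0 / ((1 - alpha0) theta).  Query the coordinates of [Q] and recurse:
   a subcube through [x] counted by the new W_k but not by W_(k+1) avoids the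
   newly queried coordinates, hence contains [x] with the coordinates of [Q]
   set, and the weight of those costs at most C on average.  Finally W_b = 0,
   feasibility of [w] bounds the first term by alpha1 + beta1, and
   theta = b delta + 1/4 gives the bound. *)

From Pilot Require Import Defs.
From HB Require Import structures.
From mathcomp Require Import all_boot all_order all_algebra.
From mathcomp Require Import ring lra.
Import Order.TTheory GRing.Theory Num.Theory.
Set Implicit Arguments. Unset Strict Implicit. Unset Printing Implicit Defensive.
Local Open Scope ring_scope.

Lemma ler_sum_subpred (R : numDomainType) (T : finType) (A B : pred T) (F : T -> R) :
  (forall i, A i -> B i) -> (forall i, B i -> 0 <= F i) ->
  \sum_(i | A i) F i <= \sum_(i | B i) F i.
Proof.
move=> AB F_ge0; rewrite [X in _ <= X](bigID A) /=.
have -> : \sum_(i | B i && A i) F i = \sum_(i | A i) F i.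
  by apply: eq_bigl => i; case Ai: (A i); rewrite ?andbT ?andbF ?AB.
by rewrite lerDl sumr_ge0 // => i /andP [/F_ge0].
Qed.

Lemma mulr_sums (R : pzSemiRingType) (T : finType) (A B : pred T) (G H : T -> R) :
  (\sum_(y | A y) G y) * (\sum_(z | B z) H z) =
  \sum_y \sum_z (A y && B z)%:R * (G y * H z).
Proof.
rewrite big_distrlr big_mkcond /=; apply: eq_bigr => y _.
case: (A y); last by rewrite big1 // => z _; rewrite mul0r.
rewrite big_mkcond; apply: eq_bigr => z _.
by case: (B z); rewrite /= ?mul1r ?mul0r.
Qed.

Lemma exists_le_weighted_mean (R : realFieldType) (T : finType) (wt F : T -> R) K L :
  (forall t, 0 <= wt t) -> 0 < K -> K <= \sum_t wt t -> \sum_t wt t * F t <= L -> 0 <= L ->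
  exists t, 0 < wt t /\ F t * K <= L.
Proof.
move=> wt_ge0 K_gt0 K_le L_ge L_ge0.
have wt_eq0 t : ~~ (0 < wt t) -> wt t = 0.
  by rewrite -leNgt => wt_le0; apply/eqP; rewrite eq_le wt_le0 wt_ge0.
have [/existsP [t0 wt0_gt0] | /existsPn wt_le0] := boolP [exists t, 0 < wt t]; last first.
  by move: K_le; rewrite big1 => [?|t _]; [lra | exact: wt_eq0].
have [/existsP [t /andP [? ?]] | /existsPn bad] :=
  boolP [exists t, (0 < wt t) && (F t * K <= L)]; first by exists t.
have lt_t t : 0 < wt t -> L < F t * K by move=> wt_gt0; move: (bad t); rewrite wt_gt0 -ltNge.
have : \sum_t wt t * L < \sum_t wt t * (F t * K).
  rewrite (bigD1 t0) // [X in _ < X](bigD1 t0) //=.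
  rewrite ltr_leD ?ltr_pM2l ?lt_t //; apply: ler_sum => t _.
  have [wt_gt0|/wt_eq0 ->] := boolP (0 < wt t); last by rewrite !mul0r.
  by rewrite ler_pM2l // ltW ?lt_t.
under [X in _ < X]eq_bigr do rewrite mulrA.
rewrite -!mulr_suml => lt_sum.
have : (\sum_t wt t * F t) * K <= L * K by rewrite ler_pM2r.
have : K * L <= (\sum_t wt t) * L by rewrite ler_wpM2r.
lra.
Qed.

Section ProductMeasure.

Variables (R : realFieldType) (n : nat) (p : 'I_n -> bool -> R).

Lemma prodmu_ge0 x : is_bitwise_marginals p -> 0 <= prodmu p x.
Proof.
move=> hp; apply: prodr_ge0 => i _.
by case: (hp i) => [? [? _]]; case: (x i).
Qed.

Lemma sum_prodmu : is_bitwise_marginals p -> \sum_x prodmu p x = 1.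
Proof.
move=> hp; rewrite /prodmu -(bigA_distr_bigA (fun i (b : bool) => p i b)) /=.
by rewrite big1 // => i _; rewrite big_bool /= addrC; case: (hp i) => [_ []].
Qed.

Definition splice (S : {set 'I_n}) (y z : cube n) : cube n :=
  [ffun i => if i \in S then z i else y i].

Lemma spliceK S y z : splice S (splice S y z) (splice S z y) = y.
Proof. by apply/ffunP => i; rewrite !ffunE; case: (i \in S). Qed.

Lemma prodmu_splice S y z :
  prodmu p (splice S y z) * prodmu p (splice S z y) = prodmu p y * prodmu p z.
Proof.
rewrite /prodmu -!big_split /=; apply: eq_bigr => i _.
by rewrite !ffunE; case: (i \in S); rewrite // mulrC.
Qed.

Lemma sum_prodmu2_splice S (F : cube n -> cube n -> R) :
  \sum_y \sum_z prodmu p y * prodmu p z * F y z =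
  \sum_y \sum_z prodmu p y * prodmu p z * F (splice S y z) (splice S z y).
Proof.
rewrite !pair_big /=.
rewrite (reindex_inj (h := fun q : cube n * cube n => (splice S q.1 q.2, splice S q.2 q.1))) /=.
  by apply: eq_bigr => q _; rewrite prodmu_splice.
move=> [y z] [y' z'] /= [e1 e2].
have -> : y = y' by rewrite -(spliceK S y z) e1 e2 spliceK.
by rewrite -(spliceK S z y) e1 e2 spliceK.
Qed.

End ProductMeasure.

Section Subcubes.

Variables (R : realFieldType) (n : nat) (p : 'I_n -> bool -> R).

Definition agree (D : {set 'I_n}) (c x : cube n) : bool := [forall i in D, x i == c i].

Definition supp_set (s : Defs.support n) : {set 'I_n} := [set i | s i != None].

Definition proj_subcube (Q : Defs.support n) (y : cube n) : cube n :=
  [ffun i => if Q i is Some b then b else y i].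

Definition agree_seq (vs : seq 'I_n) (c x : cube n) : bool := all (fun j => x j == c j) vs.

Lemma agree_set0 c x : agree set0 c x.
Proof. by apply/forall_inP => i; rewrite in_set0. Qed.

Lemma agree_splice D c S y z :
  agree D c (splice S y z) && agree D c (splice S z y) = agree D c y && agree D c z.
Proof.
apply/andP/andP => -[/forall_inP h1 /forall_inP h2]; split; apply/forall_inP => i iD;
  by move: (h1 i iD) (h2 i iD); rewrite !ffunE; case: (i \in S).
Qed.

Lemma agree_setU_seq D S c c' :
  (fun x => agree D c x && agree_seq (enum (S :\: D)) c' x) =1 agree (D :|: S) (splice D c' c).
Proof.
move=> x; apply/andP/forall_inP => [[/forall_inP xD /allP xS] j|xDS].
  rewrite inE ffunE; case: (boolP (j \in D)) => [/xD|jD /= jS] //.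
  by apply: xS; rewrite mem_enum !inE jD.
split; first by apply/forall_inP => j jD; have := xDS j; rewrite !inE ffunE jD; apply.
apply/allP => j; rewrite mem_enum inE => /andP [/negbTE jD jS].
by have := xDS j; rewrite !inE ffunE jS jD orbT; apply.
Qed.

Lemma in_subcube_splice Q y z : in_subcube Q (splice (supp_set Q) z y) = in_subcube Q y.
Proof. by apply: eq_forallb => i; rewrite ffunE inE; case: (Q i). Qed.

Lemma proj_subcube_splice Q y z :
  in_subcube Q y -> proj_subcube Q (splice (supp_set Q) y z) = y.
Proof.
move=> /forallP yQ; apply/ffunP => i; rewrite !ffunE inE.
by move: (yQ i); case: (Q i) => // b /eqP ->.
Qed.

(* For a product measure, overwriting the coordinates fixed by [Q] with their
   values in [Q] is the same as conditioning on [Q]: in ratio form,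
   [mu(A & Q) * E_A[g o proj_subcube Q] = mu(A) * E_(A & Q)[g]]. *)
Lemma sum_prodmu_proj_subcube D c Q (g : cube n -> R) :
  (\sum_(x | agree D c x && in_subcube Q x) prodmu p x) *
  (\sum_(y | agree D c y) prodmu p y * g (proj_subcube Q y)) =
  (\sum_(y | agree D c y) prodmu p y) *
  (\sum_(x | agree D c x && in_subcube Q x) prodmu p x * g x).
Proof.
rewrite mulrC [RHS]mulrC !mulr_sums.
transitivity (\sum_y \sum_z prodmu p y * prodmu p z *
  ((agree D c y && agree D c z && in_subcube Q z)%:R * g (proj_subcube Q y))).
  by apply: eq_bigr => y _; apply: eq_bigr => z _; rewrite andbA; ring.
rewrite (sum_prodmu2_splice p (supp_set Q)); apply: eq_bigr => y _; apply: eq_bigr => z _.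
rewrite -andbA andbA agree_splice in_subcube_splice andbAC.
by case Qy: (in_subcube Q y); rewrite ?andbF /= ?mul0r ?mulr0 // proj_subcube_splice //; ring.
Qed.

End Subcubes.

Section DecisionTrees.

Variables (R : realFieldType) (n : nat) (p : 'I_n -> bool -> R) (f : cube n -> bool).

Definition err_on (P : pred (cube n)) (T : dtree n) : R :=
  \sum_(x | P x && (dt_eval T x != f x)) prodmu p x.

Lemma eq_err_on P P' T : P =1 P' -> err_on P T = err_on P' T.
Proof. by move=> eP; apply: eq_bigl => x; rewrite eP. Qed.

Lemma err_on_set0 T : err_on (agree set0 [ffun=> false]) T = dt_error p f T.
Proof. by apply: eq_bigl => x; rewrite agree_set0. Qed.

Lemma err_on_leaf P v : err_on P (Leaf n v) = \sum_(x | P x && (f x != v)) prodmu p x.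
Proof. by apply: eq_bigl => x; rewrite eq_sym. Qed.

Lemma sum_split_bit i P (F : cube n -> R) :
  \sum_(x | P x) F x =
  \sum_(x | P x && (x i == false)) F x + \sum_(x | P x && (x i == true)) F x.
Proof.
rewrite (bigID (fun x : cube n => x i)) addrC /=.
by congr (_ + _); apply: eq_bigl => x; case: (x i); rewrite ?andbT ?andbF.
Qed.

Lemma err_on_query P i T0 T1 :
  err_on P (Query i T0 T1) =
  err_on (fun x => P x && (x i == false)) T0 + err_on (fun x => P x && (x i == true)) T1.
Proof.
rewrite /err_on (sum_split_bit i); congr (_ + _);
  by apply: eq_bigl => x /=; case: (x i); rewrite /= ?andbT ?andbF // andbAC.
Qed.

Lemma query_seq_tree (vs : seq 'I_n) d (g : cube n -> R) : uniq vs ->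
  forall P : pred (cube n),
  (forall c, exists T, (dt_depth T <= d)%N /\
     err_on (fun x => P x && agree_seq vs c x) T <=
     \sum_(x | P x && agree_seq vs c x) prodmu p x * g x) ->
  exists T, (dt_depth T <= d + size vs)%N /\ err_on P T <= \sum_(x | P x) prodmu p x * g x.
Proof.
elim: vs => [|i vs IH] /= => [_ P /(_ [ffun=> false]) [T [dT eT]]|/andP [i_vs uvs] P trees].
  have agree_nil : (fun x => P x && agree_seq [::] [ffun=> false] x) =1 P.
    by move=> x; rewrite andbT.
  by exists T; rewrite addn0 -(eq_err_on _ agree_nil) -(eq_bigl _ _ agree_nil).
have tree_bit (v : bool) : exists T, (dt_depth T <= d + size vs)%N /\
    err_on (fun x => P x && (x i == v)) T <= \sum_(x | P x && (x i == v)) prodmu p x * g x.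
  apply: IH => // c; pose c' : cube n := [ffun j => if j == i then v else c j].
  have agree_c' : (fun x => P x && agree_seq (i :: vs) c' x) =1
                  (fun x => P x && (x i == v) && agree_seq vs c x).
    move=> x; rewrite /agree_seq /= ffunE eqxx -andbA; congr (_ && (_ && _)).
    apply: eq_in_all => j j_vs /=; rewrite ffunE; case: (j =P i) => // ji.
    by move: j_vs; rewrite ji (negbTE i_vs).
  have [T [dT eT]] := trees c'; exists T; split=> //.
  by rewrite -(eq_err_on _ agree_c') -(eq_bigl _ _ agree_c').
have [T0 [dT0 eT0]] := tree_bit false; have [T1 [dT1 eT1]] := tree_bit true.
exists (Query i T0 T1); split; first by rewrite /= addnS ltnS geq_max dT0 dT1.
by rewrite err_on_query (sum_split_bit i) lerD.
Qed.

End DecisionTrees.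

Lemma cover_ge0 (R : realFieldType) n (v : Defs.support n -> R) x :
  (forall s, 0 <= v s) -> 0 <= Defs.cover v x.
Proof. by move=> v_ge0; apply: sumr_ge0. Qed.

Lemma sum_weighted_subcubes (R : realFieldType) n (v : Defs.support n -> R)
    (A : pred (cube n)) (G : cube n -> R) :
  \sum_Q v Q * \sum_(x | A x && in_subcube Q x) G x = \sum_(x | A x) G x * Defs.cover v x.
Proof.
under eq_bigr do rewrite big_distrr /=.
rewrite (exchange_big_dep A) /=; last by move=> Q x _ /andP [].
apply: eq_bigr => x Ax; rewrite /Defs.cover big_distrr /=.
by apply: eq_big => [Q|Q _]; rewrite ?Ax // mulrC.
Qed.

Section CoverTrees.

Variables (R : realFieldType) (n : nat) (p : 'I_n -> bool -> R) (f : cube n -> bool).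
Variables (u w : Defs.support n -> R) (a : nat) (alpha0 beta0 beta1 theta : R).
Hypothesis hp : is_bitwise_marginals p.
Hypothesis u_ge0 : forall s, 0 <= u s.
Hypothesis w_ge0 : forall s, 0 <= w s.
Hypothesis u_supp : forall s, (a < supp_size s)%N -> u s = 0.
Hypothesis cover_u_f0 : forall x, f x = false -> 1 - alpha0 <= Defs.cover u x.
Hypothesis cover_u_f1 : forall x, f x = true -> Defs.cover u x <= beta0.
Hypothesis cover_w_le1 : forall x, Defs.cover w x <= 1.
Hypothesis cover_w_f0 : forall x, f x = false -> Defs.cover w x <= beta1.
Hypothesis alpha0_lt1 : alpha0 < 1.
Hypothesis beta0_ge0 : 0 <= beta0.
Hypothesis beta1_ge0 : 0 <= beta1.
Hypothesis theta_gt0 : 0 < theta.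

Definition wide_cover (k : nat) (D : {set 'I_n}) (x : cube n) : R :=
  \sum_(s | in_subcube s x && (k < #|supp_set s :\: D|)%N) w s.

Lemma wide_cover_ge0 k D x : 0 <= wide_cover k D x.
Proof. exact: sumr_ge0. Qed.

Lemma cover_le_wide_cover0 D c x0 x :
  agree D c x0 -> f x0 = false -> agree D c x -> Defs.cover w x <= wide_cover 0 D x + beta1.
Proof.
move=> /forall_inP x0D fx0 /forall_inP xD.
rewrite /Defs.cover (bigID (fun s => 0 < #|supp_set s :\: D|)%N) /= lerD //.
apply: le_trans (cover_w_f0 fx0); apply: ler_sum_subpred => // s /andP [/forallP sx].
rewrite lt0n negbK cards_eq0 setD_eq0 => /subsetP sD.
apply/forallP => i; move: (sx i); case si: (s i) => [bi|] // /eqP <-.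
have iD : i \in D by apply: sD; rewrite inE si.
by rewrite (eqP (x0D i iD)) (eqP (xD i iD)).
Qed.

(* A subcube through [x] counted on the left but not on the right fixes no
   coordinate of [supp_set Q] outside [D]; on [D], [x] agrees with [z] and
   hence with [Q], so the subcube contains [proj_subcube Q x]. *)
Lemma wide_cover_proj_subcube k D c Q z x :
  agree D c z -> in_subcube Q z -> agree D c x ->
  wide_cover k (D :|: supp_set Q) x <= wide_cover k.+1 D x + Defs.cover w (proj_subcube Q x).
Proof.
move=> /forall_inP zD /forallP zQ /forall_inP xD.
rewrite /wide_cover (bigID (fun s => k.+1 < #|supp_set s :\: D|)%N) /=; apply: lerD.
  by apply: ler_sum_subpred => // s /andP [/andP [-> _] ->].
apply: ler_sum_subpred => // s /andP [/andP [/forallP sx wide] narrow].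
apply/forallP => i; rewrite ffunE; move: (sx i); case si: (s i) => [bi|] // /eqP xi.
case Qi: (Q i) => [qb|]; last by rewrite xi.
have iD : i \in D.
  apply: contraNT narrow => iD; apply: leq_ltn_trans wide _.
  apply: proper_card; apply/properP; split.
    by apply/subsetP => j; rewrite !inE negb_or -andbA => /and3P [-> _ ->].
  by exists i; rewrite !inE ?si ?Qi ?(negbTE iD).
move: (zQ i) (zD i iD) (xD i iD); rewrite Qi => /eqP -> /eqP -> /eqP.
by rewrite xi => ->.
Qed.

Lemma cover_le_add_f z : Defs.cover w z <= beta1 + (f z)%:R.
Proof.
case fz: (f z); last by rewrite addr0 cover_w_f0.
by rewrite ler_wpDl.
Qed.

Definition step_cost : R := beta1 + beta0 / ((1 - alpha0) * theta).

Definition error_budget (k : nat) (D : {set 'I_n}) (x : cube n) : R :=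
  (f x)%:R * (1 - Defs.cover w x + beta1 + wide_cover k D x) + (k%:R * step_cost + theta).

Definition budget_tree (k : nat) (D : {set 'I_n}) (c : cube n) : Prop :=
  exists T, (dt_depth T <= k * a)%N /\
    err_on p f (agree D c) T <= \sum_(x | agree D c x) prodmu p x * error_budget k D x.

Lemma step_cost_ge0 : 0 <= step_cost.
Proof. by rewrite addr_ge0 // divr_ge0 // mulr_ge0 ?subr_ge0 ?ltW. Qed.

Lemma error_budget_ge_theta k D x : theta <= error_budget k D x.
Proof.
rewrite /error_budget addrA lerDr addr_ge0 ?mulr_ge0 ?step_cost_ge0 //.
by rewrite addr_ge0 ?wide_cover_ge0 // addr_ge0 ?subr_ge0.
Qed.

Lemma sum_error_budget_ge_theta k D (A : pred (cube n)) :
  0 <= \sum_(x | A x) prodmu p x * error_budget k D x.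
Proof.
apply: sumr_ge0 => x _; rewrite mulr_ge0 ?prodmu_ge0 //.
exact: le_trans (ltW theta_gt0) (error_budget_ge_theta _ _ _).
Qed.

Lemma budget_tree0 D c : budget_tree 0 D c.
Proof.
have [/existsP [x0 /andP [x0D /negbTE fx0]] | /existsPn f1] :=
  boolP [exists x, agree D c x && ~~ f x]; last first.
  exists (Leaf n true); split=> //; rewrite err_on_leaf big_pred0 ?sum_error_budget_ge_theta // => x.
  by move: (f1 x); rewrite negb_and negbK => /orP [/negbTE -> // | ->]; rewrite andbF.
exists (Leaf n false); split=> //; rewrite err_on_leaf.
apply: le_trans _ (ler_sum_subpred (A := fun x => agree D c x && (f x != false)) _ _);
  last 2 first.
- by move=> x /andP [].
- by move=> x _; rewrite mulr_ge0 ?prodmu_ge0 // (le_trans (ltW theta_gt0)) ?error_budget_ge_theta.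
apply: ler_sum => x /andP [xD]; case fx: (f x) => // _; rewrite ler_peMr ?prodmu_ge0 //.
have := cover_le_wide_cover0 x0D fx0 xD; rewrite /error_budget fx mul1r mul0r add0r.
by have := ltW theta_gt0; lra.
Qed.

Lemma budget_tree_leaf k D c :
  \sum_(x | agree D c x && ~~ f x) prodmu p x <= theta * \sum_(x | agree D c x) prodmu p x ->
  budget_tree k D c.
Proof.
move=> light; exists (Leaf n true); split=> //.
rewrite err_on_leaf; under eq_bigl do rewrite eqb_id.
apply: le_trans light _; rewrite mulr_sumr; apply: ler_sum => x _.
by rewrite mulrC ler_wpM2l ?prodmu_ge0 ?error_budget_ge_theta.
Qed.

Definition subcube_mass D c Q := \sum_(x | agree D c x && in_subcube Q x) prodmu p x.

Lemma sum_subcube_mass_ge D c :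
  (1 - alpha0) * \sum_(x | agree D c x && ~~ f x) prodmu p x <=
  \sum_Q u Q * subcube_mass D c Q.
Proof.
rewrite sum_weighted_subcubes [X in _ <= X](bigID f) /= addrC ler_wpDr //.
  by apply: sumr_ge0 => x _; rewrite mulr_ge0 ?prodmu_ge0 ?cover_ge0.
rewrite mulr_sumr; apply: ler_sum => x /andP [_ /negbTE fx].
by rewrite mulrC ler_wpM2l ?prodmu_ge0 ?cover_u_f0.
Qed.

Lemma sum_subcube_mass_proj_le D c :
  \sum_Q u Q * subcube_mass D c Q *
    (\sum_(y | agree D c y) prodmu p y * (f (proj_subcube Q y))%:R) <=
  (\sum_(x | agree D c x) prodmu p x) * (beta0 * \sum_(x | agree D c x) prodmu p x * (f x)%:R).
Proof.
rewrite /subcube_mass.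
under eq_bigr do rewrite -mulrA (sum_prodmu_proj_subcube _ _ _ _ (fun z => (f z)%:R)) mulrCA.
rewrite -mulr_sumr sum_weighted_subcubes; apply: ler_wpM2l.
  by apply: sumr_ge0 => x _; exact: prodmu_ge0.
rewrite mulr_sumr; apply: ler_sum => x _.
case fx: (f x); rewrite ?mulr1 ?mulr0 ?mul0r //.
by rewrite mulrC ler_wpM2r ?prodmu_ge0 ?cover_u_f1.
Qed.

Lemma exists_good_subcube D c :
  theta * \sum_(x | agree D c x) prodmu p x < \sum_(x | agree D c x && ~~ f x) prodmu p x ->
  exists Q z, [/\ (supp_size Q <= a)%N, agree D c z, in_subcube Q z &
    \sum_(y | agree D c y) prodmu p y * (f (proj_subcube Q y))%:R <=
    beta0 / ((1 - alpha0) * theta) * \sum_(x | agree D c x) prodmu p x].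
Proof.
set mass := \sum_(x | agree D c x) prodmu p x.
set mass0 := \sum_(x | _ && ~~ f x) _ => heavy.
set mass1 := \sum_(x | agree D c x) prodmu p x * (f x)%:R.
have mu_ge0 x : 0 <= prodmu p x by exact: prodmu_ge0.
have mass0_le : mass0 <= mass by apply: ler_sum_subpred => // x /andP [].
have mass1_le : mass1 <= mass by apply: ler_sum => x _; case: (f x); rewrite ?mulr1 ?mulr0.
have mass_gt0 : 0 < mass.
  by apply: lt_le_trans mass0_le; apply: le_lt_trans heavy; rewrite mulr_ge0 ?sumr_ge0 ?ltW.
have wt_ge0 Q : 0 <= u Q * subcube_mass D c Q by rewrite mulr_ge0 ?sumr_ge0.
have alpha0' : 0 < 1 - alpha0 by rewrite subr_gt0.
have K_gt0 : 0 < (1 - alpha0) * mass0.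
  by rewrite mulr_gt0 // (le_lt_trans _ heavy) // mulr_ge0 ?ltW.
have mass1_ge0 : 0 <= mass1 by apply: sumr_ge0 => x _; rewrite mulr_ge0.
have L_ge0 : 0 <= mass * (beta0 * mass1) by rewrite !mulr_ge0 // ltW.
have [Q [wt_gt0 avg]] := exists_le_weighted_mean wt_ge0 K_gt0
  (sum_subcube_mass_ge D c) (sum_subcube_mass_proj_le D c) L_ge0.
have /existsP [z /andP [zD zQ]] : [exists z, agree D c z && in_subcube Q z].
  apply: contraTT wt_gt0 => /existsPn none.
  by rewrite /subcube_mass big_pred0 ?mulr0 ?ltxx // => x; apply/negbTE/none.
exists Q, z; split=> //.
  by rewrite leqNgt; apply/negP => /u_supp uQ0; rewrite uQ0 mul0r ltxx in wt_gt0.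
set FQ := \sum_(y | agree D c y) _ in avg *.
have FQ_ge0 : 0 <= FQ by apply: sumr_ge0 => y _; rewrite mulr_ge0.
rewrite mulrAC ler_pdivlMr ?mulr_gt0 // -(ler_pM2r mass_gt0).
apply: le_trans (_ : FQ * ((1 - alpha0) * mass0) <= _).
  by rewrite -!mulrA ler_wpM2l // ler_wpM2l ?ltW // mulrC ltW.
apply: le_trans avg _.
rewrite mulrCA -[leRHS]mulrA ler_wpM2l // ler_wpM2l //; exact: ltW.
Qed.

Lemma sum_cover_proj_le D c Q :
  \sum_(y | agree D c y) prodmu p y * (f (proj_subcube Q y))%:R <=
    beta0 / ((1 - alpha0) * theta) * \sum_(x | agree D c x) prodmu p x ->
  \sum_(x | agree D c x) prodmu p x * ((f x)%:R * Defs.cover w (proj_subcube Q x)) <=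
    step_cost * \sum_(x | agree D c x) prodmu p x.
Proof.
move=> good; apply: le_trans (_ : _ <= \sum_(x | agree D c x)
  prodmu p x * (beta1 + (f (proj_subcube Q x))%:R)) _.
  apply: ler_sum => x _; rewrite ler_wpM2l ?prodmu_ge0 //.
  apply: le_trans (cover_le_add_f _).
  by case: (f x); rewrite ?mul1r ?mul0r ?cover_ge0.
under eq_bigr do rewrite mulrDr.
by rewrite big_split -mulr_suml /= mulrDl mulrC lerD2l.
Qed.

Lemma budget_tree_query k D c Q z :
  (forall D' c', budget_tree k D' c') ->
  (supp_size Q <= a)%N -> agree D c z -> in_subcube Q z ->
  \sum_(y | agree D c y) prodmu p y * (f (proj_subcube Q y))%:R <=
    beta0 / ((1 - alpha0) * theta) * \sum_(x | agree D c x) prodmu p x ->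
  budget_tree k.+1 D c.
Proof.
move=> IH suppQ zD zQ good; set S := supp_set Q.
have [T [dT eT]] : exists T, (dt_depth T <= k * a + size (enum (S :\: D)))%N /\
    err_on p f (agree D c) T <= \sum_(x | agree D c x) prodmu p x * error_budget k (D :|: S) x.
  apply: query_seq_tree (enum_uniq _) _ _ => c'.
  have [T [dT eT]] := IH (D :|: S) (splice D c' c).
  have e := agree_setU_seq D S c c'.
  by exists T; rewrite (eq_err_on _ _ _ e) (eq_bigl _ _ e).
exists T; split.
  apply: leq_trans dT _; rewrite mulSnr leq_add2l -cardE.
  exact: leq_trans (subset_leq_card (subsetDl S D)) suppQ.
apply: le_trans eT _.
apply: le_trans (_ : _ <= \sum_(x | agree D c x) prodmu p x *
  (error_budget k.+1 D x + ((f x)%:R * Defs.cover w (proj_subcube Q x) - step_cost))) _.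
  apply: ler_sum => x xD; rewrite ler_wpM2l ?prodmu_ge0 // /error_budget -natr1.
  have := wide_cover_proj_subcube k zD zQ xD.
  by case: (f x); rewrite ?mul1r ?mul0r; lra.
under eq_bigr do rewrite mulrDr mulrBr.
rewrite big_split sumrB /= -mulr_suml gerDl subr_le0 mulrC.
exact: sum_cover_proj_le.
Qed.

Lemma budget_treeP k D c : budget_tree k D c.
Proof.
elim: k D c => [|k IH] D c; first exact: budget_tree0.
have [light|heavy] := leP (\sum_(x | agree D c x && ~~ f x) prodmu p x)
                          (theta * \sum_(x | agree D c x) prodmu p x).
  exact: budget_tree_leaf.
have [Q [z [suppQ zD zQ good]]] := exists_good_subcube heavy.
exact: budget_tree_query IH suppQ zD zQ good.
Qed.

Lemma sum_error_budget_set0 b c : (forall s, (b < supp_size s)%N -> w s = 0) ->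
  \sum_(x | agree set0 c x) prodmu p x * error_budget b set0 x =
  \sum_x prodmu p x * ((f x)%:R * (1 - Defs.cover w x + beta1)) + (b%:R * step_cost + theta).
Proof.
move=> w_supp; under eq_bigl do rewrite agree_set0.
have wide0 x : wide_cover b set0 x = 0.
  by apply: big1 => s /andP [_]; rewrite setD0 => /w_supp.
under eq_bigr do rewrite /error_budget wide0 addr0 mulrDr.
by rewrite big_split -mulr_suml sum_prodmu ?mul1r.
Qed.

End CoverTrees.

Lemma ler_mul_div_shift (R : realFieldType) (c m K d e : R) :
  0 <= c -> 0 <= m -> 0 < K -> 0 < d -> 0 < e ->
  m * (c / (K * (m * d + e))) <= c / (K * d).
Proof.
move=> c_ge0 m_ge0 K_gt0 d_gt0 e_gt0.
have md_gt0 : 0 < m * d + e by rewrite ltr_wpDl // mulr_ge0 // ltW.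
have -> : m * (c / (K * (m * d + e))) = c / (K * d) * (m * d / (m * d + e)).
  by field; rewrite !gt_eqF.
apply: ler_piMr; first by rewrite divr_ge0 // mulr_ge0 // ltW.
by rewrite ler_pdivrMr // mul1r lerDl ltW.
Qed.

Lemma sum_uncovered_le (R : realFieldType) n (p : 'I_n -> bool -> R) (f : cube n -> bool)
    (w : Defs.support n -> R) alpha1 beta1 :
  is_bitwise_marginals p -> 0 <= alpha1 -> 0 <= beta1 ->
  (1 - alpha1) * mu_z p f true <= \sum_s mu_z_sub p f true s * w s ->
  \sum_x prodmu p x * ((f x)%:R * (1 - Defs.cover w x + beta1)) <= alpha1 + beta1.
Proof.
move=> hp alpha1_ge0 beta1_ge0 mass_w.
have cover_mass : \sum_(x | f x == true) prodmu p x * Defs.cover w x =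
                  \sum_s mu_z_sub p f true s * w s.
  rewrite -sum_weighted_subcubes; apply: eq_bigr => s _; rewrite mulrC.
  by congr (_ * _); apply: eq_bigl => x; rewrite andbC.
have mass_le1 : mu_z p f true <= 1.
  rewrite -(sum_prodmu hp); apply: ler_sum_subpred => // x _; exact: prodmu_ge0.
have -> : \sum_x prodmu p x * ((f x)%:R * (1 - Defs.cover w x + beta1)) =
    (1 + beta1) * mu_z p f true - \sum_(x | f x == true) prodmu p x * Defs.cover w x.
  rewrite /mu_z mulr_sumr -sumrB [RHS]big_mkcond; apply: eq_bigr => x _.
  by case: (f x); rewrite /= ?mul1r ?mul0r ?mulr0 ?subr0 //; ring.
rewrite cover_mass.
have : 0 <= (alpha1 + beta1) * (1 - mu_z p f true).
  by apply: mulr_ge0; [exact: addr_ge0 | rewrite subr_ge0].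
lra.
Qed.

Theorem mainTheorem11 (R : realFieldType) (n : nat) (f : cube n -> bool)
  (delta : R) (a b : nat) (alpha0 beta0 alpha1 beta1 : R)
  (p : 'I_n -> bool -> R) :
  0 < delta ->
  0 <= alpha0 -> alpha0 < 1 ->
  0 <= beta0 -> 0 <= alpha1 -> 0 <= beta1 ->
  is_bitwise_marginals p ->
  feasible p f alpha0 beta0 alpha1 beta1 a b ->
  exists t : dtree n,
    (dt_depth t <= a * b)%N /\
    dt_error p f t <= 1/4 + alpha1 + beta1 + 4 * b%:R * (beta1 + delta)
                      + beta0 / ((1 - alpha0) * delta).
Proof.
move=> delta_gt0 _ alpha0_lt1 beta0_ge0 alpha1_ge0 beta1_ge0 hp
  [u [w [hu [hw [cover_u_f0 [cover_u_f1 [mass_w [cover_w_le1 cover_w_f0]]]]]]]].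
have u_ge0 s : 0 <= u s by case: (hu s).
have w_ge0 s : 0 <= w s by case: (hw s).
have u_supp s : (a < supp_size s)%N -> u s = 0 by move=> hs; case: (hu s) => _; apply; left.
have w_supp s : (b < supp_size s)%N -> w s = 0 by move=> hs; case: (hw s) => _; apply; left.
(* The [1/4] keeps [theta] positive when [b = 0]. *)
pose theta := b%:R * delta + 1/4.
have quarter_gt0 : 0 < 1/4 :> R by rewrite divr_gt0.
have theta_gt0 : 0 < theta by rewrite ltr_wpDl // mulr_ge0 // ltW.
have [T [dT eT]] := budget_treeP hp u_ge0 w_ge0 u_supp cover_u_f0 cover_u_f1 cover_w_le1
  cover_w_f0 alpha0_lt1 beta0_ge0 beta1_ge0 theta_gt0 b set0 [ffun=> false].
exists T; split; first by rewrite mulnC.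
rewrite -err_on_set0; apply: le_trans eT _; rewrite sum_error_budget_set0 //.
have := sum_uncovered_le hp alpha1_ge0 beta1_ge0 mass_w.
have alpha0' : 0 < 1 - alpha0 by rewrite subr_gt0.
have := ler_mul_div_shift beta0_ge0 (ler0n R b) alpha0' delta_gt0 quarter_gt0.
have := mulr_ge0 (ler0n R b) beta1_ge0.
have := mulr_ge0 (ler0n R b) (ltW delta_gt0).
rewrite /step_cost /theta; lra.
Qed.
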